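(* Let $q$ be a prime power, $m>2$, $n\ge1$, and let $\mathscr{C}\subseteq\mathrm{GF}(q^m)^n$ be a scalable code. Let $f:\mathrm{GF}(q^m)^n\times\mathrm{GF}(q^m)^n\to\mathrm{GF}(q^m)$ be a biadditive form and $\tilde f$ the biadditive form on $\mathrm{GF}(q)^{mn}$ induced by $f$. Suppose $\mathrm{Im}_{\mathscr{B}}(\mathscr{C})$ is self-orthogonal w.r.t. $\tilde f$ for five bases $\mathscr{B}_1,\ldots,\mathscr{B}_5$ of $\mathrm{GF}(q^m)$ over $\mathrm{GF}(q)$ whose dual bases are $\mathscr{B}_1'=\{\beta_1,\ldots,\beta_m\}$, $\mathscr{B}_2'=\{\beta_1+\alpha\beta_2,\beta_2,\ldots,\beta_m\}$, $\mathscr{B}_3'=\{\beta_1+\gamma\beta_3,\beta_2,\ldots,\beta_m\}$, $\mathscr{B}_4'=\{\beta_1,\beta_2+\delta\beta_3,\beta_3,\ldots,\beta_m\}$ and $\mathscr{B}_5'=\{\beta_1+\alpha\beta_2+\gamma\beta_3,\beta_2,\ldots,\beta_m\}$, where $\alpha,\gamma,\delta$ are nonzero (not necessarily distinct) elements of $\mathrm{GF}(q)$. Then $\mathrm{Tr}(\mathscr{C})$ is self-orthogonal w.r.t. $f$ (restricted to $\mathrm{GF}(q)^n\times\mathrm{GF}(q)^n$), and $\mathrm{Im}_{\mathscr{B}}(\mathscr{C})$ is self-orthogonal w.r.t. $\tilde f$ for every basis $\mathscr{B}$ of $\mathrm{GF}(q^m)$ over $\mathrm{GF}(q)$.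
   Context: $\mathrm{Tr}:\mathrm{GF}(q^m)\to\mathrm{GF}(q)$, $\mathrm{Tr}(a)=\sum_{i=0}^{m-1}a^{q^i}$. The dual basis of a basis $\{\gamma_1,\ldots,\gamma_m\}$ of $\mathrm{GF}(q^m)$ over $\mathrm{GF}(q)$ is the unique basis $\{\beta_1,\ldots,\beta_m\}$ with $\mathrm{Tr}(\gamma_i\beta_j)=\delta_{ij}$. A code $\mathscr{C}\subseteq\mathrm{GF}(q^m)^n$ is scalable if $x\in\mathscr{C}\Rightarrow\alpha x\in\mathscr{C}$ for all $\alpha\in\mathrm{GF}(q^m)$. A biadditive form is additive in each argument. For a basis $\mathscr{B}$ with dual basis $\{\beta_1,\ldots,\beta_m\}$, $\mathrm{Im}_{\mathscr{B}}(\mathscr{C})=\{(\mathrm{Tr}(\beta_1x_1),\ldots,\mathrm{Tr}(\beta_1x_n),\ldots,\mathrm{Tr}(\beta_mx_1),\ldots,\mathrm{Tr}(\beta_mx_n)):x\in\mathscr{C}\}\subseteq\mathrm{GF}(q)^{mn}$, and $\mathrm{Tr}(\mathscr{C})=\{(\mathrm{Tr}(x_1),\ldots,\mathrm{Tr}(x_n)):x\in\mathscr{C}\}$. The induced form is $\tilde f(x,y)=\sum_{i=0}^{m-1}f((x_{in+1},\ldots,x_{in+n}),(y_{in+1},\ldots,y_{in+n}))$ for $x,y\in\mathrm{GF}(q)^{mn}$. A code $D$ is self-orthogonal w.r.t. a form $g$ if $g(x,y)=0$ for all $x,y\in D$. *)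

From HB Require Import structures.
From mathcomp Require Import all_boot all_order all_algebra all_field.
Set Implicit Arguments. Unset Strict Implicit. Unset Printing Implicit Defensive.
Import GRing.Theory.
Local Open Scope ring_scope.

(* GF(q) is a finite field F (q = #|F|), GF(q^m) is a field
   extension L of F with \dim {:L} = m.  Vectors over GF(q) are represented by
   their images in L (entries of the form a%:A, a : F). *)

Section Defs.
Variables (F : finFieldType) (L : fieldExtType F).

Definition Tr (a : L) : L := \sum_(i < \dim {:L}) a ^+ (#|F| ^ i).

Definition is_basis (m : nat) (g : 'I_m -> L) : Prop :=
  basis_of fullv [seq g i | i <- enum 'I_m].

Definition is_dual_basis (m : nat) (g b : 'I_m -> L) : Prop :=
  is_basis g /\ is_basis b /\ forall i j, Tr (g i * b j) = (i == j)%:R.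

Definition scalable_code (n : nat) (C : 'rV[L]_n -> Prop) : Prop :=
  forall x, C x -> forall a : L, C (a *: x).

Definition biadditive (U : zmodType) (W : zmodType)
  (f : U -> U -> W) : Prop :=
  (forall x y z, f (x + y) z = f x z + f y z) /\
  (forall x y z, f x (y + z) = f x y + f x z).

(* Im_B(C), given the dual basis b = {beta_1..beta_m} of B: the vector whose
   coordinate i*n + j is Tr(beta_i x_j) (mxvec uses this row-major order). *)
Definition ImB (m n : nat) (b : 'I_m -> L) (C : 'rV[L]_n -> Prop)
  : 'rV[L]_(m * n) -> Prop :=
  fun v => exists x, C x /\ v = mxvec (\matrix_(i < m, j < n) Tr (b i * x 0 j)).

Definition TrC (n : nat) (C : 'rV[L]_n -> Prop) : 'rV[L]_n -> Prop :=
  fun v => exists x, C x /\ v = map_mx Tr x.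

Definition induced_form (m n : nat) (f : 'rV[L]_n -> 'rV[L]_n -> L)
  (x y : 'rV[L]_(m * n)) : L :=
  \sum_(i < m) f (row i (vec_mx x)) (row i (vec_mx y)).

Definition self_orthogonal (k : nat) (D : 'rV[L]_k -> Prop)
  (g : 'rV[L]_k -> 'rV[L]_k -> L) : Prop :=
  forall x y, D x -> D y -> g x y = 0.

(* beta_k, as a 0-based index into the family b *)
Definition bn (m : nat) (b : 'I_m -> L) (k : nat) : L :=
  nth 0 [seq b i | i <- enum 'I_m] k.

End Defs.

From HB Require Import structures.
From mathcomp Require Import all_boot all_order all_algebra all_field abelian.
From mathcomp Require Import ring.
Set Implicit Arguments. Unset Strict Implicit. Unset Printing Implicit Defensive.
Import GRing.Theory.
Local Open Scope ring_scope.

(* Fix codewords x, y and put Phi(u, w) = f(Tr(u x), Tr(w y)), a biadditive map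
   on L.  By scalability, Im_B(C) is self-orthogonal iff
   sum_i Phi(beta_i a, beta_i c) = 0 for all a, c, and changing one beta_k by u
   changes that sum by the polar increment of v |-> Phi(v a, v c) at beta_k.
   The five bases thus give, with s = beta_2 / (delta beta_3) and
   e = gamma / (alpha delta),
     Phi(A, C) + Phi(A, s C) = Phi(e A, e^-1 s C),
   i.e. Phi = ((tau - 1) Phi)(., s .) where (tau Psi)(A, C) = Psi(e A, e^-1 C).
   Iterating q times and using (tau - 1)^q = tau^q - 1 = tau - 1 (characteristic
   p, e^q = e) gives ((tau - 1) Phi)(., s .) = ((tau - 1) Phi)(., s^q .).  As s is
   not in GF(q), additivity forces (tau - 1) Phi = 0, hence Phi = 0, and
   f(Tr x, Tr y) = Phi(1, 1) = 0 yields both claims. *)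

Section FrobeniusTrace.
Variables (F : finFieldType) (L : fieldExtType F).

Lemma expf_card_expn (c : F) i : c ^+ (#|F| ^ i) = c.
Proof.
elim: i => [|i IH]; first by rewrite expn0 expr1.
by rewrite expnSr exprM IH expf_card.
Qed.

Lemma frobenius_fixed_in_alg (x : L) : x ^+ #|F| = x -> exists c : F, x = c%:A.
Proof.
move=> /eqP xF; have := Fermat's_little_theorem 1%AS x.
by rewrite /= dimv1 expn1 xF => /vlineP.
Qed.

Lemma pchar_nat_card : [pchar L].-nat #|F|.
Proof.
have [p _ pF] := finPcharP F.
have pL : p \in [pchar L] by rewrite pchar_lalg.
rewrite (eq_pnat _ (pcharf_eq pL)) -cardsT.
exact: abelem_pgroup (fin_ring_pchar_abelem pF).
Qed.

Lemma TrD (x y : L) : Tr (x + y) = Tr x + Tr y.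
Proof.
rewrite /Tr -big_split; apply: eq_bigr => i _.
by rewrite exprDn_pchar // pnatX pchar_nat_card.
Qed.

Lemma TrZ (c : F) (x : L) : Tr (c%:A * x) = c%:A * Tr x.
Proof.
rewrite /Tr mulr_sumr; apply: eq_bigr => i _.
by rewrite exprMn -in_algE -rmorphXn expf_card_expn.
Qed.

Lemma Tr0 : Tr (0 : L) = 0.
Proof. by have := TrZ 0 0; rewrite scale0r !mul0r. Qed.

End FrobeniusTrace.

Section DualBasis.
Variables (F : finFieldType) (L : fieldExtType F) (m : nat) (g b : 'I_m -> L).
Hypothesis Tr_gb : forall i j, Tr (g i * b j) = (i == j)%:R.

Lemma dual_basis_neq0 j : b j != 0.
Proof.
apply/eqP => bj0; have := Tr_gb j j.
by rewrite bj0 mulr0 Tr0 eqxx => /eqP; rewrite eq_sym oner_eq0.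
Qed.

Lemma dual_basis_scale_free i j (c : F) : i != j -> b i != c%:A * b j.
Proof.
move=> ne_ij; apply/eqP => b_ij; have := Tr_gb i i.
rewrite {1}b_ij mulrCA TrZ Tr_gb (negPf ne_ij) mulr0 eqxx => /eqP.
by rewrite eq_sym oner_eq0.
Qed.

Lemma dual_basis_ratio_moved i j (c : F) : i != j -> c != 0 ->
  (b i / (c%:A * b j)) ^+ #|F| != b i / (c%:A * b j).
Proof.
move=> ne_ij c0; apply/negP => /eqP /frobenius_fixed_in_alg [d bij].
have cbj0 : c%:A * b j != 0 by rewrite mulf_neq0 ?dual_basis_neq0 // -in_algE fmorph_eq0.
have := dual_basis_scale_free (d * c) ne_ij.
by rewrite -[b i](divfK cbj0) bij mulrA -!in_algE -rmorphM eqxx.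
Qed.

End DualBasis.

Lemma exprB1n_pchar (R : comNzRingType) (x : R) q :
  [pchar R].-nat q -> (x - 1) ^+ q = x ^+ q - 1.
Proof. by move=> qR; rewrite exprDn_pchar // exprNn_pchar // expr1n. Qed.

Section CoefPairing.
Variables (R : nzRingType) (w : nat -> R).

Definition coef_pairing (P : {poly R}) := \sum_(i < size P) P`_i * w i.

Lemma coef_pairingE (P : {poly R}) n :
  (size P <= n)%N -> coef_pairing P = \sum_(i < n) P`_i * w i.
Proof.
move=> leP; rewrite /coef_pairing (big_ord_widen n (fun i => P`_i * w i) leP).
rewrite big_mkcond /=; apply: eq_bigr => i _; case: ltnP => // ge_i.
by rewrite nth_default ?mul0r.
Qed.

Lemma coef_pairingB (P Q : {poly R}) :
  coef_pairing (P - Q) = coef_pairing P - coef_pairing Q.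
Proof.
set n := maxn (size P) (size Q).
have leB : (size (P - Q)%R <= n)%N.
  by rewrite (leq_trans (size_polyD _ _)) // size_polyN.
rewrite (coef_pairingE leB) (coef_pairingE (leq_maxl (size P) (size Q)))
  (coef_pairingE (leq_maxr (size P) (size Q))) -sumrB.
by apply: eq_bigr => i _; rewrite coefB mulrBl.
Qed.

Lemma coef_pairing1 : coef_pairing 1 = w 0.
Proof. by rewrite (@coef_pairingE _ 1) ?size_poly1 // big_ord1 coef1 mul1r. Qed.

Lemma coef_pairingXn n : coef_pairing 'X^n = w n.
Proof.
rewrite (@coef_pairingE _ n.+1) ?size_polyXn // big_ord_recr /=.
rewrite big1 => [|i _]; first by rewrite coefXn eqxx mul1r add0r.
by rewrite coefXn (ltn_eqF (ltn_ord i)) mul0r.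
Qed.

End CoefPairing.

Lemma eq_coef_pairing (R : nzRingType) (w1 w2 : nat -> R) :
  w1 =1 w2 -> coef_pairing w1 =1 coef_pairing w2.
Proof. by move=> eq_w P; apply: eq_bigr => i _; rewrite eq_w. Qed.

Lemma coef_pairingXM (R : nzRingType) (w : nat -> R) (P : {poly R}) :
  coef_pairing w ('X * P) = coef_pairing (fun i => w i.+1) P.
Proof.
have leXP : (size ('X * P)%R <= (size P).+1)%N.
  by rewrite (leq_trans (size_polyMleq _ _)) // size_polyX.
rewrite (coef_pairingE _ leXP) big_ord_recl coefXM mul0r add0r.
by apply: eq_bigr => i _; rewrite coefXM.
Qed.

Section TwistedRecurrence.
Variables (K : fieldType) (Phi : K -> K -> K).
Hypothesis PhiDr : forall A C1 C2, Phi A (C1 + C2) = Phi A C1 + Phi A C2.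
Variables (q : nat) (e s : K).
Hypotheses (q_pchar : [pchar K].-nat q) (e_fixed : e ^+ q = e).
Hypothesis s_moved : s ^+ q != s.
Hypothesis recurrence :
  forall A C, Phi A C + Phi A (s * C) = Phi (e * A) (e^-1 * (s * C)).

(* [coef_pairing (twist A C) P] is (P(tau) Phi)(A, C). *)
Let twist A C i := Phi (e ^+ i * A) ((e ^+ i)^-1 * C).
Let twist_diff A C := Phi (e * A) (e^-1 * C) - Phi A C.

Let twistS A C i : twist A C i.+1 = twist (e * A) (e^-1 * C) i.
Proof. by rewrite /twist exprSr invfM -!mulrA. Qed.

Let twist_diff_s A C : twist_diff A (s * C) = Phi A C.
Proof. by rewrite /twist_diff -recurrence addrK. Qed.

Let Phi_coef_pairing j A C :
  Phi A C = coef_pairing (twist A (s ^+ j * C)) (('X - 1) ^+ j).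
Proof.
elim: j A C => [|j IH] A C.
  by rewrite expr0 coef_pairing1 /twist !expr0 invr1 !mul1r.
rewrite [('X - 1) ^+ _.+1]exprS mulrBl mul1r coef_pairingB coef_pairingXM.
rewrite (eq_coef_pairing (twistS _ _)) exprSr -!mulrA mulrCA -!IH.
exact/esym/twist_diff_s.
Qed.

Let twist_diff_sq A C : twist_diff A (s ^+ q * C) = Phi A C.
Proof.
have qX : [pchar {poly K}].-nat q by rewrite (eq_pnat _ (@pchar_poly K)).
rewrite (Phi_coef_pairing q) exprB1n_pchar // coef_pairingB coef_pairingXn.
by rewrite coef_pairing1 /twist e_fixed expr0 invr1 !mul1r.
Qed.

Let twist_diffD A C1 C2 :
  twist_diff A (C1 + C2) = twist_diff A C1 + twist_diff A C2.
Proof. by rewrite /twist_diff mulrDr !PhiDr; ring. Qed.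

Let twist_diff_eq0 A C : twist_diff A C = 0.
Proof.
have sq_s : s ^+ q - s != 0 by rewrite subr_eq0.
pose C' := (s ^+ q - s)^-1 * C.
have : twist_diff A (s ^+ q * C') = twist_diff A (s * C').
  by rewrite twist_diff_sq twist_diff_s.
have -> : s ^+ q * C' = C + s * C' by rewrite /C'; field.
by rewrite twist_diffD -{2}(add0r (twist_diff A (s * C'))) => /addIr.
Qed.

Lemma twisted_recurrence_eq0 A C : Phi A C = 0.
Proof. by rewrite -twist_diff_s twist_diff_eq0. Qed.

End TwistedRecurrence.

Section BiadditiveForm.
Variables (K : fieldType) (Phi : K -> K -> K).
Hypothesis PhiDl : forall A1 A2 C, Phi (A1 + A2) C = Phi A1 C + Phi A2 C.
Hypothesis PhiDr : forall A C1 C2, Phi A (C1 + C2) = Phi A C1 + Phi A C2.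

Definition diag_sum m (b : 'I_m -> K) a c := \sum_(i < m) Phi (b i * a) (b i * c).

Definition polar_incr x u a c :=
  Phi (x * a) (u * c) + Phi (u * a) (x * c) + Phi (u * a) (u * c).

Lemma diag_sum_update m (b : 'I_m -> K) (k : 'I_m) u a c :
  diag_sum (fun i => if val i == val k then b k + u else b i) a c =
  diag_sum b a c + polar_incr (b k) u a c.
Proof.
rewrite /diag_sum (bigD1 k) //= eqxx [in RHS](bigD1 k) //=.
rewrite (eq_bigr (fun i => Phi (b i * a) (b i * c))) => [|i ne_ik]; last first.
  by rewrite val_eqE (negPf ne_ik).
by rewrite /polar_incr !mulrDl !PhiDl !PhiDr; ring.
Qed.

Lemma polar_incr_eq0 m (b : 'I_m -> K) (k : 'I_m) u :
  (forall a c, diag_sum b a c = 0) ->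
  (forall a c, diag_sum (fun i => if val i == val k then b k + u else b i) a c = 0) ->
  forall a c, polar_incr (b k) u a c = 0.
Proof. by move=> Nb Nu a c; have := Nu a c; rewrite diag_sum_update Nb add0r. Qed.

Lemma polar_incrD x u v a c :
  polar_incr x (u + v) a c =
  polar_incr x u a c + polar_incr x v a c + Phi (u * a) (v * c) + Phi (v * a) (u * c).
Proof. by rewrite /polar_incr !mulrDl !PhiDl !PhiDr; ring. Qed.

Lemma polar_cross_eq0 x u v :
  (forall a c, polar_incr x u a c = 0) -> (forall a c, polar_incr x v a c = 0) ->
  (forall a c, polar_incr x (u + v) a c = 0) ->
  forall a c, Phi (u * a) (v * c) + Phi (v * a) (u * c) = 0.
Proof.
by move=> Iu Iv Iuv a c; have := polar_incrD x u v a c; rewrite Iuv Iu Iv !add0r.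
Qed.

Lemma recurrence_of_polar (Q R alpha gamma delta : K) :
  R != 0 -> alpha != 0 -> gamma != 0 -> delta != 0 ->
  (forall a c, polar_incr Q (delta * R) a c = 0) ->
  (forall a c,
     Phi (alpha * Q * a) (gamma * R * c) + Phi (gamma * R * a) (alpha * Q * c) = 0) ->
  let s := Q / (delta * R) in let e := gamma / (alpha * delta) in
  forall A C, Phi A C + Phi A (s * C) = Phi (e * A) (e^-1 * (s * C)).
Proof.
move=> R0 a0 g0 d0 incr cross s e A C.
have nz := (R0, a0, g0, d0).
have := incr (A / (delta * R)) (C / (delta * R)); rewrite /polar_incr.
have -> : Q * (A / (delta * R)) = s * A by rewrite /s; field; rewrite !nz.
have -> : Q * (C / (delta * R)) = s * C by rewrite /s; field; rewrite !nz.
have -> : delta * R * (A / (delta * R)) = A by field; rewrite !nz.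
have -> : delta * R * (C / (delta * R)) = C by field; rewrite !nz.
have := cross (A / (alpha * delta * R)) (C / (gamma * R)).
have -> : alpha * Q * (A / (alpha * delta * R)) = s * A by rewrite /s; field; rewrite !nz.
have -> : gamma * R * (C / (gamma * R)) = C by field; rewrite !nz.
have -> : gamma * R * (A / (alpha * delta * R)) = e * A by rewrite /e; field; rewrite !nz.
have -> : alpha * Q * (C / (gamma * R)) = e^-1 * (s * C).
  by rewrite /e /s invf_div; field; rewrite !nz.
move=> /eqP; rewrite addr_eq0 => /eqP E5 /eqP; rewrite -addrA addr_eq0 => /eqP E4.
by apply: oppr_inj; rewrite addrC -E4 E5.
Qed.

End BiadditiveForm.

Lemma bnE (F : finFieldType) (L : fieldExtType F) m (b : 'I_m -> L) k (lt_km : (k < m)%N) :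
  bn b k = b (Ordinal lt_km).
Proof.
rewrite /bn (nth_map (Ordinal lt_km)) ?size_enum_ord //; congr b.
by apply: val_inj; rewrite /= nth_enum_ord.
Qed.

Section TraceForm.
Variables (F : finFieldType) (L : fieldExtType F) (n : nat).
Variables (f : 'rV[L]_n -> 'rV[L]_n -> L) (C : 'rV[L]_n -> Prop).
Hypothesis C_scalable : scalable_code C.

Definition tr_form (x y : 'rV[L]_n) u w :=
  f (map_mx (@Tr F L) (u *: x)) (map_mx (@Tr F L) (w *: y)).

Lemma map_Tr_scaleDl (z : 'rV[L]_n) u1 u2 :
  map_mx (@Tr F L) ((u1 + u2) *: z) =
  map_mx (@Tr F L) (u1 *: z) + map_mx (@Tr F L) (u2 *: z).
Proof. by apply/matrixP => i j; rewrite !mxE mulrDl TrD. Qed.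

Lemma tr_form_biadditive x y : biadditive f ->
  (forall u1 u2 w, tr_form x y (u1 + u2) w = tr_form x y u1 w + tr_form x y u2 w) /\
  (forall u w1 w2, tr_form x y u (w1 + w2) = tr_form x y u w1 + tr_form x y u w2).
Proof. by case=> fDl fDr; split=> *; rewrite /tr_form map_Tr_scaleDl ?fDl ?fDr. Qed.

Lemma induced_form_ImB m (b : 'I_m -> L) (x y : 'rV[L]_n) :
  induced_form f (mxvec (\matrix_(i < m, j < n) Tr (b i * x 0 j)))
                 (mxvec (\matrix_(i < m, j < n) Tr (b i * y 0 j))) =
  diag_sum (tr_form x y) b 1 1.
Proof.
rewrite /induced_form !mxvecK; apply: eq_bigr => i _.
by rewrite !mulr1; congr f; apply/rowP => j; rewrite !mxE.
Qed.

Lemma ImB_self_orthogonal_diag_sum m (b : 'I_m -> L) (x y : 'rV[L]_n) :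
  self_orthogonal (ImB b C) (induced_form f) -> C x -> C y ->
  forall a c, diag_sum (tr_form x y) b a c = 0.
Proof.
move=> so Cx Cy a c.
have := so _ _ (ex_intro _ (a *: x) (conj (C_scalable Cx a) erefl))
               (ex_intro _ (c *: y) (conj (C_scalable Cy c) erefl)).
rewrite induced_form_ImB => <-; apply: eq_bigr => i _.
by rewrite /tr_form !scalerA !mulr1.
Qed.

Lemma self_orthogonal_TrC :
  (forall x y, C x -> C y -> tr_form x y 1 1 = 0) -> self_orthogonal (TrC C) f.
Proof.
by move=> tr0 _ _ [x [Cx ->]] [y [Cy ->]]; rewrite -(tr0 x y) // /tr_form !scale1r.
Qed.

Lemma self_orthogonal_ImB m (b : 'I_m -> L) :
  (forall x y, C x -> C y -> tr_form x y 1 1 = 0) ->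
  self_orthogonal (ImB b C) (induced_form f).
Proof.
move=> tr0 _ _ [x [Cx ->]] [y [Cy ->]]; rewrite induced_form_ImB.
apply: big1 => i _; rewrite -(tr0 _ _ (C_scalable Cx (b i)) (C_scalable Cy (b i))).
by rewrite /tr_form !scalerA !mulr1 mul1r.
Qed.

End TraceForm.

Theorem theorem5 (F : finFieldType) (L : fieldExtType F) (m n : nat)
  (hm : (2 < m)%N) (hn : (0 < n)%N) (hdim : \dim {:L} = m)
  (C : 'rV[L]_n -> Prop) (hC : scalable_code C)
  (f : 'rV[L]_n -> 'rV[L]_n -> L) (hf : biadditive f)
  (alpha gamma delta : F)
  (ha : alpha != 0) (hg : gamma != 0) (hd : delta != 0)
  (beta : 'I_m -> L) (B1 B2 B3 B4 B5 : 'I_m -> L)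
  (h1 : is_dual_basis B1 beta)
  (h2 : is_dual_basis B2 (fun i => if val i == 0%N
          then bn beta 0 + alpha%:A * bn beta 1 else beta i))
  (h3 : is_dual_basis B3 (fun i => if val i == 0%N
          then bn beta 0 + gamma%:A * bn beta 2 else beta i))
  (h4 : is_dual_basis B4 (fun i => if val i == 1%N
          then bn beta 1 + delta%:A * bn beta 2 else beta i))
  (h5 : is_dual_basis B5 (fun i => if val i == 0%N
          then bn beta 0 + alpha%:A * bn beta 1 + gamma%:A * bn beta 2
          else beta i))
  (so1 : self_orthogonal (ImB beta C) (induced_form f))
  (so2 : self_orthogonal (ImB (fun i => if val i == 0%N
          then bn beta 0 + alpha%:A * bn beta 1 else beta i) C) (induced_form f))
  (so3 : self_orthogonal (ImB (fun i => if val i == 0%N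
          then bn beta 0 + gamma%:A * bn beta 2 else beta i) C) (induced_form f))
  (so4 : self_orthogonal (ImB (fun i => if val i == 1%N
          then bn beta 1 + delta%:A * bn beta 2 else beta i) C) (induced_form f))
  (so5 : self_orthogonal (ImB (fun i => if val i == 0%N
          then bn beta 0 + alpha%:A * bn beta 1 + gamma%:A * bn beta 2
          else beta i) C) (induced_form f)) :
  self_orthogonal (TrC C) f /\
  (forall B b : 'I_m -> L, is_dual_basis B b ->
     self_orthogonal (ImB b C) (induced_form f)).
Proof.
have lt1m : (1 < m)%N := ltnW hm; have lt0m : (0 < m)%N := ltnW lt1m.
rewrite !(bnE beta lt0m) !(bnE beta lt1m) !(bnE beta hm) in so2 so3 so4 so5.
rewrite -addrA in so5.
suff tr0 x y : C x -> C y -> tr_form f x y 1 1 = 0.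
  by split=> [|B b _]; [apply: self_orthogonal_TrC | apply: self_orthogonal_ImB].
move=> Cx Cy; have [PhiDl PhiDr] := tr_form_biadditive x y hf.
have N1 := ImB_self_orthogonal_diag_sum hC so1 Cx Cy.
have incr k u so := polar_incr_eq0 PhiDl PhiDr (k := k) (u := u) N1
  (ImB_self_orthogonal_diag_sum hC so Cx Cy).
have cross := polar_cross_eq0 PhiDl PhiDr (incr (Ordinal lt0m) _ so2)
  (incr (Ordinal lt0m) _ so3) (incr (Ordinal lt0m) _ so5).
have [_ [_ dual]] := h1.
have nz c : c != 0 -> c%:A != 0 :> L by rewrite -in_algE fmorph_eq0.
have rec := recurrence_of_polar (dual_basis_neq0 dual (Ordinal hm))
  (nz _ ha) (nz _ hg) (nz _ hd) (incr (Ordinal lt1m) _ so4) cross.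
apply: (twisted_recurrence_eq0 PhiDr (@pchar_nat_card F L) _ _ rec).
  by rewrite -!in_algE -rmorphM -fmorphV -rmorphM -rmorphXn expf_card.
exact: (dual_basis_ratio_moved dual (i := Ordinal lt1m) (j := Ordinal hm) isT hd).
Qed.
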